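(* Let $F=(f_1,\dots,f_p)\in\mathbb{C}[X_1,\dots,X_n]^p$ be such that $\langle F\rangle$ is radical and $V(F)\subset\mathbb{C}^n$ is smooth and equidimensional of dimension $\delta=n-p$, and let $i\in\{1,\dots,\delta+1\}$. Suppose $F$ satisfies $\mathbf{H}_i(1)$, $\mathbf{H}_i(2)$, $\mathbf{H}_i(3)$, and that $\bm\sigma=(\sigma_1,\dots,\sigma_{i-1})\in\mathbb{C}^{i-1}$ satisfies $\mathbf{H}'_i$. Then for any $\bm u=(u_1,\dots,u_p)\in\mathbb{C}^p$, $0$ is a regular value of the $n+p$ polynomials \[X_1-\sigma_1,\dots,X_{i-1}-\sigma_{i-1},\ F,\ [L_1\cdots L_p]\cdot\mathrm{jac}(F,i),\ u_1L_1+\dots+u_pL_p-1,\] i.e. at every common zero in $\mathbb{C}^{n+p}$ their Jacobian with respect to $(X_1,\dots,X_n,L_1,\dots,L_p)$ has rank $n+p$.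
   Context: $L_1,\dots,L_p$ are new variables; $\mathrm{jac}(F,i)$ is the $p\times(n-i)$ matrix of partial derivatives $\partial f_k/\partial X_j$, $j=i+1,\dots,n$. $W(i,F)=\{\bm x: F(\bm x)=0,\ \mathrm{rank}(\mathrm{jac}(F,i)(\bm x))<p\}$. $\mathbf{H}_i(1)$: $W(i,F)$ is empty or $(i-1)$-equidimensional. $\mathbf{H}_i(2)$: at every $(\bm x,\bm\ell)$ with $\bm\ell\ne0$ cancelling $F,\ [L_1\cdots L_p]\cdot\mathrm{jac}(F,i)$, their Jacobian with respect to $(X,L)$ has rank $n+p-i$. $\mathbf{H}_i(3)$: $W(i,F)$ is empty or $\mathbb{C}[X_1,\dots,X_{i-1}]\to\mathbb{C}[X_1,\dots,X_n]/I(W(i,F))$ is injective and integral. $\mathbf{H}'_i$: at every common zero $(\bm x,\bm\ell)$ with $\bm\ell\ne0$ of the $n+p-1$ polynomials $X_1-\sigma_1,\dots,X_{i-1}-\sigma_{i-1},F,[L_1\cdots L_p]\cdot\mathrm{jac}(F,i)$, their Jacobian with respect to $(X,L)$ has rank $n+p-1$. *)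

From mathcomp Require Import all_boot all_algebra.
From mathcomp Require Import Rstruct complex.
From mathcomp Require Export mpoly.
From Stdlib Require Import Reals.

Set Implicit Arguments.
Unset Strict Implicit.
Unset Printing Implicit Defensive.

Import GRing.Theory.
Local Open Scope ring_scope.

Definition C : closedFieldType := (Rdefinitions.R)[i].

Definition point (n : nat) := 'I_n -> C.
Definition cset (n : nat) := point n -> Prop.

Definition in_ideal n p (F : 'I_p -> {mpoly C[n]}) (g : {mpoly C[n]}) : Prop :=
  exists q : 'I_p -> {mpoly C[n]}, g = \sum_(k < p) q k * F k.

Definition radical_ideal n p (F : 'I_p -> {mpoly C[n]}) : Prop :=
  forall (g : {mpoly C[n]}) (e : nat), in_ideal F (g ^+ e) -> in_ideal F g.

Definition zeros n p (F : 'I_p -> {mpoly C[n]}) : cset n :=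
  fun x => forall k : 'I_p, (F k).@[x] = 0.

Definition vanishes_on n (V : cset n) (g : {mpoly C[n]}) : Prop :=
  forall x, V x -> g.@[x] = 0.

Definition subset n (A B : cset n) : Prop := forall x, A x -> B x.

Definition zclosed n (Z : cset n) : Prop :=
  exists S : {mpoly C[n]} -> Prop,
    forall x, Z x <-> (forall g, S g -> g.@[x] = 0).

Definition irreducible n (Z : cset n) : Prop :=
  [/\ zclosed Z, exists x, Z x &
      forall A B : cset n, zclosed A -> zclosed B ->
        subset Z (fun x => A x \/ B x) -> subset Z A \/ subset Z B].

Definition irr_chain n (c : nat -> cset n) (d : nat) (Z : cset n) : Prop :=
  [/\ forall k, leq k d -> irreducible (c k),
      forall k, ltn k d -> subset (c k) (c k.+1) /\ ~ subset (c k.+1) (c k)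
    & forall x, c d x <-> Z x].

Definition irr_dim n (Z : cset n) (d : nat) : Prop :=
  (exists c, irr_chain c d Z) /\ ~ (exists c, irr_chain c d.+1 Z).

Definition component n (W Z : cset n) : Prop :=
  [/\ irreducible Z, subset Z W &
      forall Z', irreducible Z' -> subset Z Z' -> subset Z' W -> subset Z' Z].

Definition equidim n (W : cset n) (d : nat) : Prop :=
  forall Z, component W Z -> irr_dim Z d.

Definition nonempty n (W : cset n) : Prop := exists x, W x.

Definition jacobian n m (G : 'I_m -> {mpoly C[n]}) (x : point n) : 'M[C]_(m, n) :=
  \matrix_(r < m, c < n) (mderiv c (G r)).@[x].

(* V is smooth, of dimension d at each of its points: the Zariski tangent
   space T_x V = { v | dg(x) v = 0 for all g in I(V) } has dimension d,
   i.e. the differentials at x of the polynomials of I(V) span a space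
   of dimension n - d. *)
Definition smooth_of_dim n (V : cset n) (d : nat) : Prop :=
  forall x, V x ->
    (exists G : 'I_(n - d) -> {mpoly C[n]},
        (forall r, vanishes_on V (G r)) /\ \rank (jacobian G x) = subn n d) /\
    (forall m (G : 'I_m -> {mpoly C[n]}),
        (forall r, vanishes_on V (G r)) -> leq (\rank (jacobian G x)) (n - d)).

Lemma shift_ord_proof n i (j : 'I_(n - i)) : (ltn (addn i j) n).
Proof. by have := ltn_ord j; rewrite ltn_subRL. Qed.

(* the column index j (0-based, j < n - i) of jac(F,i) corresponds to the
   variable X_{i+1+j} (1-based), i.e. the 0-based variable i + j *)
Definition shift_ord n i (j : 'I_(n - i)) : 'I_n := Ordinal (shift_ord_proof j).

Definition jacFi n p (F : 'I_p -> {mpoly C[n]}) (i : nat) (x : point n)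
  : 'M[C]_(p, n - i) :=
  \matrix_(k < p, j < n - i) (mderiv (shift_ord j) (F k)).@[x].

Definition W n p (F : 'I_p -> {mpoly C[n]}) (i : nat) : cset n :=
  fun x => zeros F x /\ ltn (\rank (jacFi F i x)) p.

(* Polynomials in the variables (X_1..X_n, L_1..L_p), i.e. C[n + p]    *)
Definition Xv n p (j : 'I_n) : {mpoly C[n + p]} := 'X_(lshift p j).
Definition Lv n p (k : 'I_p) : {mpoly C[n + p]} := 'X_(rshift n k).

Definition liftX n p (f : {mpoly C[n]}) : {mpoly C[n + p]} :=
  f \mPo [tuple Xv p j | j < n].

Definition sysF n p (F : 'I_p -> {mpoly C[n]}) : seq {mpoly C[n + p]} :=
  [seq liftX p (F k) | k <- enum 'I_p].

Definition sysLag n p (F : 'I_p -> {mpoly C[n]}) (i : nat) : seq {mpoly C[n + p]} :=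
  [seq \sum_(k < p) Lv n k * liftX p (mderiv (shift_ord j) (F k))
  | j <- enum 'I_(n - i)].

Definition sysSigma n p (i : nat) (sigma : (i.-1).-tuple C) : seq {mpoly C[n + p]} :=
  [seq Xv p j - (nth 0 sigma (nat_of_ord j))%:MP | j : 'I_n <- [seq j0 <- enum 'I_n | ltn (nat_of_ord j0) i.-1]].

Definition affL n p (u : 'I_p -> C) : {mpoly C[n + p]} :=
  \sum_(k < p) (u k)%:MP * Lv n k - 1.

Definition jacXL N (s : seq {mpoly C[N]}) (z : point N) : 'M[C]_(size s, N) :=
  \matrix_(r < size s, c < N) (mderiv c (s`_r)).@[z].

Definition common_zero N (s : seq {mpoly C[N]}) (z : point N) : Prop :=
  forall g, g \in s -> g.@[z] = 0.

Definition L_nonzero n p (z : point (n + p)) : Prop :=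
  exists k : 'I_p, z (rshift n k) != 0.

Definition H1 n p (F : 'I_p -> {mpoly C[n]}) (i : nat) : Prop :=
  ~ nonempty (W F i) \/ equidim (W F i) i.-1.

Definition H2 n p (F : 'I_p -> {mpoly C[n]}) (i : nat) : Prop :=
  forall z : point (n + p), L_nonzero z ->
    common_zero (sysF F ++ sysLag F i) z ->
    \rank (jacXL (sysF F ++ sysLag F i) z) = subn (addn n p) i.

Definition in_first_vars n (k : nat) (g : {mpoly C[n]}) : Prop :=
  forall m, m \in msupp g -> forall j : 'I_n, leq k j -> m j = 0%nat.

(* C[X_1..X_{i-1}] -> C[X]/I(W) is injective and integral *)
Definition H3 n p (F : 'I_p -> {mpoly C[n]}) (i : nat) : Prop :=
  ~ nonempty (W F i) \/
  ((forall g, in_first_vars i.-1 g -> vanishes_on (W F i) g -> g = 0) /\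
   (forall g : {mpoly C[n]}, exists (d : nat) (a : 'I_d -> {mpoly C[n]}),
       (forall k, in_first_vars i.-1 (a k)) /\
       vanishes_on (W F i) (g ^+ d + \sum_(k < d) a k * g ^+ k))).

Definition H' n p (F : 'I_p -> {mpoly C[n]}) (i : nat) (sigma : (i.-1).-tuple C)
  : Prop :=
  forall z : point (n + p), L_nonzero z ->
    common_zero (@sysSigma n p i sigma ++ sysF F ++ sysLag F i) z ->
    \rank (jacXL (@sysSigma n p i sigma ++ sysF F ++ sysLag F i) z) = subn (addn n p) 1.

(* Let z = (x, l) be a common zero.  The polynomials
   X_j - sigma_j and f_k do not involve L and [L_1 ... L_p] . jac(F, i) is
   linear in L, so by Euler's identity their derivatives at z in the
   direction (0, l) are 0 and their values at z respectively, i.e. 0 in both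
   cases: (0, l) lies in the kernel of the Jacobian of the first n + p - 1
   polynomials, which has rank n + p - 1 by H'_i (applicable since u . l = 1
   forces l <> 0).  The derivative of u . L - 1 in that direction is
   u . l = 1, so its gradient raises the rank to n + p. *)
From mathcomp Require Import all_boot all_algebra.

Set Implicit Arguments.
Unset Strict Implicit.
Unset Printing Implicit Defensive.

Import GRing.Theory.
Local Open Scope ring_scope.

Lemma capmx_row_kernel_eq0 (K : fieldType) m N (B : 'M[K]_(m, N)) (a : 'rV_N)
    (w : 'cV_N) :
  B *m w = 0 -> a *m w != 0 -> (B :&: a)%MS = 0.
Proof.
move=> Bw aw; apply/eqP/rowV0P => x.
rewrite sub_capmx => /andP[/submxP[D ->] /sub_rVP[c xa]].
have : c *: (a *m w) = 0 by rewrite scalemxAl -xa -mulmxA Bw mulmx0.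
by move/eqP; rewrite scaler_eq0 (negbTE aw) orbF => /eqP c0; rewrite xa c0 scale0r.
Qed.

Lemma mxrank_full_of_kernel_vector (K : fieldType) m k N (A : 'M[K]_(k, N))
    (B : 'M_(m, N)) (a : 'rV_N) (w : 'cV_N) :
  (B <= A)%MS -> (a <= A)%MS -> \rank B = N.-1 ->
  B *m w = 0 -> a *m w != 0 -> \rank A = N.
Proof.
move=> BA aA rB Bw aw.
have a0 : a != 0 by apply: contraNneq aw => ->; rewrite mul0mx.
have N_gt0 : (0 < N)%N.
  by case: N a w a0 {A B BA aA rB Bw aw} => // a w; rewrite thinmx0 eqxx.
apply/eqP; rewrite eqn_leq rank_leq_col /=.
have := mxrankS (_ : (B + a <= A)%MS).
rewrite mxrank_disjoint_sum; last exact: capmx_row_kernel_eq0 Bw aw.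
rewrite rB rank_rV a0 addn1 prednK //.
by apply; rewrite addsmx_sub BA aA.
Qed.

Section DirectionalDerivative.

Variables (R : comNzRingType) (N : nat) (z w : 'I_N -> R).

Definition dderiv (g : {mpoly R[N]}) : R := \sum_(c < N) w c * (mderiv c g).@[z].

Lemma dderiv0 : dderiv 0 = 0.
Proof. by rewrite /dderiv big1 // => c _; rewrite mderiv0 meval0 mulr0. Qed.

Lemma dderivD g h : dderiv (g + h) = dderiv g + dderiv h.
Proof. by rewrite /dderiv -big_split; apply: eq_bigr => c _; rewrite mderivD mevalD mulrDr. Qed.

Lemma dderivN g : dderiv (- g) = - dderiv g.
Proof. by rewrite /dderiv -sumrN; apply: eq_bigr => c _; rewrite mderivN mevalN mulrN. Qed.

Lemma dderivB g h : dderiv (g - h) = dderiv g - dderiv h.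
Proof. by rewrite dderivD dderivN. Qed.

Lemma dderiv_sum (I : Type) (r : seq I) (P : pred I) (G : I -> {mpoly R[N]}) :
  dderiv (\sum_(k <- r | P k) G k) = \sum_(k <- r | P k) dderiv (G k).
Proof. exact: (big_morph dderiv dderivD dderiv0). Qed.

Lemma dderivM g h : dderiv (g * h) = dderiv g * h.@[z] + g.@[z] * dderiv h.
Proof.
rewrite /dderiv mulr_suml mulr_sumr -big_split; apply: eq_bigr => c _.
by rewrite mderivM mevalD !mevalM mulrDr !mulrA [_ * g.@[z]]mulrC.
Qed.

Lemma dderivC c : dderiv c%:MP = 0.
Proof. by rewrite /dderiv big1 // => j _; rewrite mderivC meval0 mulr0. Qed.

Lemma dderivZ c g : dderiv (c *: g) = c * dderiv g.
Proof. by rewrite -mul_mpolyC dderivM dderivC mul0r add0r mevalC. Qed.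

Lemma dderivX j : dderiv 'X_j = w j.
Proof.
rewrite /dderiv (bigD1 j) //= big1 => [|c /negbTE cj]; last first.
  by rewrite mderivX mnm1E eq_sym cj scale0r meval0 mulr0.
rewrite mderivX mnm1E eqxx scale1r addr0.
have -> : (U_(j) - U_(j) = 0)%MM by apply/mnmP => c; rewrite mnmBE subnn mnm0E.
by rewrite mpolyX0 meval1 mulr1.
Qed.

Lemma dderiv_comp_mpoly k (f : {mpoly R[k]}) (t : k.-tuple {mpoly R[N]}) :
  (forall j, dderiv (tnth t j) = 0) -> dderiv (f \mPo t) = 0.
Proof.
move=> t0; rewrite comp_mpolyE dderiv_sum big1 // => m _; rewrite dderivZ.
suff -> : dderiv (\prod_(j < k) tnth t j ^+ m j) = 0 by rewrite mulr0.
apply: (big_ind (fun q => dderiv q = 0)); first by rewrite -mpolyC1 dderivC.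
  by move=> g h g0 h0; rewrite dderivM g0 h0 mul0r mulr0 addr0.
move=> j _; elim: (m j) => [|e IHe]; first by rewrite expr0 -mpolyC1 dderivC.
by rewrite exprS dderivM IHe t0 mul0r mulr0 addr0.
Qed.

End DirectionalDerivative.

Lemma jacXL_sub N (s t : seq {mpoly C[N]}) (z : point N) :
  {subset s <= t} -> (jacXL s z <= jacXL t z)%MS.
Proof.
move=> st; apply/row_subP => r.
have r_t : (index (nth 0%R s r) t < size t)%N by rewrite index_mem st ?mem_nth.
suff -> : row r (jacXL s z) = row (Ordinal r_t) (jacXL t z) by apply: row_sub.
by apply/rowP => c; rewrite !mxE nth_index ?st ?mem_nth.
Qed.

Lemma jacXL_mul_col N (s : seq {mpoly C[N]}) (z w : point N) :
  jacXL s z *m (\col_c w c) = \col_r dderiv z w s`_r.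
Proof.
by apply/colP => r; rewrite !mxE; apply: eq_bigr => c _; rewrite !mxE mulrC.
Qed.

Lemma jacXL_seq1_mul_col_neq0 N (g : {mpoly C[N]}) (z w : point N) :
  dderiv z w g != 0 -> jacXL [:: g] z *m (\col_c w c) != 0.
Proof.
apply: contraNneq => /matrixP/(_ 0 0); rewrite !mxE => <-.
by rewrite /dderiv; apply/eqP/eq_bigr => c _; rewrite !mxE mulrC.
Qed.

Section LagrangeDirection.

Variables (n p : nat) (z : point (n + p)).

Definition Ldir : point (n + p) := fun c => if (n <= c)%N then z c else 0.

Local Notation D := (dderiv z Ldir).

Lemma dderiv_Ldir_Xv j : D (Xv p j) = 0.
Proof. by rewrite dderivX /Ldir /= leqNgt ltn_ord. Qed.

Lemma dderiv_Ldir_Lv k : D (Lv n k) = z (rshift n k).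
Proof. by rewrite dderivX /Ldir /= leq_addr. Qed.

Lemma dderiv_Ldir_liftX f : D (liftX p f) = 0.
Proof. by apply: dderiv_comp_mpoly => j; rewrite tnth_mktuple dderiv_Ldir_Xv. Qed.

Lemma dderiv_Ldir_sysSigma_sysF (F : 'I_p -> {mpoly C[n]}) i
    (sigma : (i.-1).-tuple C) h :
  h \in @sysSigma n p i sigma ++ sysF F -> D h = 0.
Proof.
rewrite mem_cat => /orP[] /mapP[j _ ->]; last exact: dderiv_Ldir_liftX.
by rewrite dderivB dderiv_Ldir_Xv dderivC subr0.
Qed.

Lemma dderiv_Ldir_sysLag (F : 'I_p -> {mpoly C[n]}) i h :
  h \in sysLag F i -> D h = h.@[z].
Proof.
case/mapP=> j _ ->; rewrite dderiv_sum (big_morph _ (mevalD z) (meval0 z)).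
apply: eq_bigr => k _.
by rewrite dderivM dderiv_Ldir_Lv dderiv_Ldir_liftX mulr0 addr0 mevalM mevalXU.
Qed.

Lemma dderiv_Ldir_affL (u : 'I_p -> C) :
  D (affL n u) = \sum_(k < p) u k * z (rshift n k).
Proof.
rewrite dderivB -mpolyC1 dderivC subr0 dderiv_sum; apply: eq_bigr => k _.
by rewrite dderivM dderivC dderiv_Ldir_Lv mul0r add0r mevalC.
Qed.

Lemma jacXL_mul_Ldir_eq0 (F : 'I_p -> {mpoly C[n]}) i (sigma : (i.-1).-tuple C) :
  common_zero (sysLag F i) z ->
  jacXL (@sysSigma n p i sigma ++ sysF F ++ sysLag F i) z *m (\col_c Ldir c) = 0.
Proof.
move=> czLag; rewrite jacXL_mul_col; apply/colP => r; rewrite !mxE.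
have := mem_nth 0 (ltn_ord r); move: (_`_r) => h.
rewrite catA mem_cat => /orP[/dderiv_Ldir_sysSigma_sysF // | h_Lag].
by rewrite (dderiv_Ldir_sysLag h_Lag) czLag.
Qed.

End LagrangeDirection.

Lemma affL_eval n p (u : 'I_p -> C) (z : point (n + p)) :
  (affL n u).@[z] = \sum_(k < p) u k * z (rshift n k) - 1.
Proof.
rewrite mevalB meval1 (big_morph _ (mevalD z) (meval0 z)); congr (_ - _).
by apply: eq_bigr => k _; rewrite mevalM mevalC mevalXU.
Qed.

Lemma L_nonzero_of_dot_eq1 n p (u : 'I_p -> C) (z : point (n + p)) :
  \sum_(k < p) u k * z (rshift n k) = 1 -> L_nonzero z.
Proof.
move=> dot1; apply/existsP; apply: contra_eqT dot1 => /existsPn l0.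
rewrite big1 => [|k _]; first by rewrite eq_sym oner_eq0.
by move/negPn/eqP: (l0 k) => ->; rewrite mulr0.
Qed.

Theorem corollary3 (n p : nat) (F : 'I_p -> {mpoly C[n]}) (i : nat)
  (sigma : (i.-1).-tuple C) :
  leq p n ->
  radical_ideal F ->
  equidim (zeros F) (n - p) ->
  smooth_of_dim (zeros F) (n - p) ->
  leq 1 i && leq i (n - p + 1) ->
  H1 F i -> H2 F i -> H3 F i -> H' F sigma ->
  forall u : 'I_p -> C,
  forall z : point (n + p),
    common_zero (@sysSigma n p i sigma ++ sysF F ++ sysLag F i ++ [:: affL n u]) z ->
    \rank (jacXL (@sysSigma n p i sigma ++ sysF F ++ sysLag F i ++ [:: affL n u]) z)
      = addn n p.
Proof.
move=> _ _ _ _ _ _ _ _ H'_sigma u z.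
set s1 := @sysSigma n p i sigma ++ sysF F ++ sysLag F i.
set s := (X in jacXL X z) => cz.
have s1_s : {subset s1 <= s} by move=> h; rewrite !mem_cat => /or3P[] ->; rewrite ?orbT.
have affL_s : {subset [:: affL n u] <= s}.
  by move=> h; rewrite mem_seq1 => /eqP->; rewrite !mem_cat mem_seq1 eqxx !orbT.
have cz1 : common_zero s1 z by move=> h /s1_s; apply: cz.
have dot1 : \sum_(k < p) u k * z (rshift n k) = 1.
  by apply/eqP; rewrite -subr_eq0 -affL_eval cz ?affL_s ?mem_seq1.
apply: (mxrank_full_of_kernel_vector (jacXL_sub z s1_s) (jacXL_sub z affL_s)
          (w := \col_c Ldir z c)).
- by rewrite (H'_sigma z (L_nonzero_of_dot_eq1 dot1) cz1) subn1.
- by apply: jacXL_mul_Ldir_eq0 => h h_Lag; apply: cz1; rewrite !mem_cat h_Lag !orbT.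
- by apply: jacXL_seq1_mul_col_neq0; rewrite dderiv_Ldir_affL dot1 oner_eq0.
Qed.
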